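(* Let $\alpha,\beta>0$, $X\sim\mathsf{Beta}(\alpha,\beta)$ and $\mu_d=\mathbf{E}[(X-\mathbf{E}[X])^d]$ for integers $d\ge 0$ (so $\mu_0=1$, $\mu_1=0$). Then for every integer $d\ge 2$, $$\mu_d=\frac{(d-1)(\beta-\alpha)}{(\alpha+\beta)(\alpha+\beta+d-1)}\,\mu_{d-1}+\frac{(d-1)\alpha\beta}{(\alpha+\beta)^2(\alpha+\beta+d-1)}\,\mu_{d-2}.$$
   Context: $\mathsf{Beta}(\alpha,\beta)$ denotes the distribution on $[0,1]$ with density proportional to $x^{\alpha-1}(1-x)^{\beta-1}$. *)

From HB Require Import structures.
From mathcomp Require Import all_boot all_order all_algebra.
From mathcomp Require Import all_classical all_reals all_analysis.
Set Implicit Arguments. Unset Strict Implicit. Unset Printing Implicit Defensive.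
Import Order.TTheory GRing.Theory Num.Theory.
Local Open Scope classical_set_scope.
Local Open Scope ring_scope.

Definition beta_density {R : realType} (a b : R) (x : R) : R :=
  (x `^ (a - 1)) * ((1 - x) `^ (b - 1)).

Definition beta_expect {R : realType} (a b : R) (g : R -> R) : R :=
  Rintegral lebesgue_measure `]0, 1[ (fun x => g x * beta_density a b x)
  / Rintegral lebesgue_measure `]0, 1[ (beta_density a b).

Definition beta_central_moment {R : realType} (a b : R) (d : nat) : R :=
  beta_expect a b (fun x => (x - beta_expect a b id) ^+ d).

From HB Require Import structures.
From mathcomp Require Import all_boot all_order all_algebra.
From mathcomp Require Import all_classical all_reals all_analysis.
From mathcomp Require Import ring lra measurable_realfun.
Set Implicit Arguments. Unset Strict Implicit. Unset Printing Implicit Defensive.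
Import Order.TTheory GRing.Theory Num.Theory.
Import numFieldNormedType.Exports.
Local Open Scope classical_set_scope.
Local Open Scope ring_scope.

(* Let D(x) = x^(a-1) (1-x)^(b-1) be the unnormalised Beta(a,b) density and
   J p = \int_0^1 p(x) D(x) dx for a polynomial p; every Beta expectation of
   a polynomial is then J p / J 1, and J is linear.  For any c and n, the
   function F(x) = x^a (1-x)^b (x-c)^n vanishes at 0 and 1 and has derivative
   S(x) D(x) on ]0,1[, where S is the Stein polynomial
     S(x) = (a(1-x) - b x) (x-c)^n + n x(1-x) (x-c)^(n-1).
   Since D may blow up at the endpoints, we use a fundamental theorem of
   calculus for integrands that are integrable on [0,1] but only continuous
   on ]0,1[; it gives the Stein identity J S = 0.  For n = 0 it computes the
   mean m = a/(a+b); for c = m and n = k+1, expanding S in powers of X - m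
   gives a linear relation between J (X-m)^(k+2), J (X-m)^(k+1), J (X-m)^k,
   which is the theorem after division by J 1.  When J 1 = 0 every moment
   is 0 (division by zero) and the statement is trivial. *)

Section integrable_FTC2.
Context {R : realType}.
Notation mu := (@lebesgue_measure R).

(* FTC for an integrand that is integrable on [a,b] and continuous on ]a,b[:
   F - \int_a^x f has zero derivative inside and is continuous on [a,b]. *)
Lemma integrable_FTC2 (f F : R -> R) (a b : R) : a < b ->
  mu.-integrable `[a, b] (EFin \o f) ->
  {in `]a, b[, continuous f} ->
  derivable_oo_LRcontinuous F a b ->
  {in `]a, b[, derive1 F =1 f} ->
  \int[mu]_(x in `[a, b]) f x = F b - F a.
Proof.
move=> ab intf cf dF F'f.
pose G x := \int[mu]_(t in `[a, x]) f t.
have G'f x : x \in `]a, b[ -> derivable G x 1 /\ derive1 G x = f x.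
  move=> xab; move: (xab) => /[!in_itv]/= /andP[ax xb].
  exact: continuous_FTC1_closed xb intf ax (cf x xab).
have dFG x : x \in `]a, b[ -> is_derive x 1 (F \- G) 0.
  move=> xab; have [dG G'x] := G'f x xab.
  have [dF1 _ _] := dF; have dFx := dF1 x xab.
  apply: DeriveDef; first exact: derivableB.
  by rewrite deriveB// -!derive1E G'x F'f// subrr.
have cFG : {within `[a, b], continuous (F \- G)}.
  move=> x; apply: continuousB; first exact: derivable_oo_LRcontinuous_within.
  exact: (parameterized_integral_continuous (ltW ab) intf).
have [c _] := MVT ab dFG cFG.
have Ga0 : G a = 0 by rewrite /G set_itv1 Rintegral_set1.
rewrite mul0r /= Ga0 subr0 => /eqP; rewrite subr_eq0 => /eqP FGab.
by rewrite -/(G b); lra.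
Qed.

(* The same statement for the open interval, whose endpoints are negligible. *)
Lemma integrable_FTC2_oo (f F : R -> R) (a b : R) : a < b ->
  measurable_fun `[a, b] f -> mu.-integrable `]a, b[ (EFin \o f) ->
  {in `]a, b[, continuous f} ->
  derivable_oo_LRcontinuous F a b ->
  {in `]a, b[, derive1 F =1 f} ->
  \int[mu]_(x in `]a, b[) f x = F b - F a.
Proof.
move=> ab mf intf cf dF F'f.
have mfoo : measurable_fun `]a, b[ (EFin \o f).
  apply/measurable_EFinP; apply: measurable_funS mf => //.
  exact: subset_itv_oo_cc.
rewrite -(integrable_FTC2 ab _ cf dF F'f).
  by congr fine; symmetry; exact: integral_itv_bndoo.
apply/integrableP; split; first exact/measurable_EFinP.
rewrite integral_itv_bndoo; first by case/integrableP: intf.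
exact: measurableT_comp.
Qed.
End integrable_FTC2.

Section beta_density_regularity.
Context {R : realType}.

Lemma continuous_powR_gt0 (p x : R) : 0 < x ->
  {for x, continuous (@powR R ^~ p)}.
Proof.
move=> x0; apply/differentiable_continuous/derivable1_diffP.
by apply: derivable_powR; rewrite in_itv/= x0.
Qed.

Lemma continuous_onem_powR (p x : R) : x < 1 ->
  {for x, continuous (fun y : R => (1 - y) `^ p)}.
Proof.
move=> x1; apply: (@continuous_comp _ _ _ (fun y : R => 1 - y) (@powR R ^~ p)).
  by apply: continuousB; [exact: cst_continuous | exact: cvg_id].
by apply: continuous_powR_gt0; rewrite subr_gt0.
Qed.

Lemma onem_powR_cvg1 (p : R) : 0 < p -> (1 - x) `^ p @[x --> 1^'-] --> 0.
Proof.
move=> p0.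
apply: (@decreasing_cvg_at_left_comp R (fun x => 1 - x) (@powR R ^~ p)
  -oo%O 1 0) => //.
- by move=> x y _ _ xy; rewrite ltrD2l ltrN2.
- apply: cvg_at_left_filter.
  by apply: continuousB; [exact: cst_continuous | exact: cvg_id].
- by rewrite subrr; exact: powR_cvg0.
Qed.

Lemma measurable_beta_density (a b : R) :
  measurable_fun setT (beta_density a b).
Proof.
apply: measurable_funM; first exact: measurable_powR.
apply: (measurableT_comp (measurable_powR _)).
by apply: measurable_funB => //; exact: measurable_id.
Qed.

Lemma continuous_beta_density (a b x : R) : 0 < x < 1 ->
  {for x, continuous (beta_density a b)}.
Proof.
move=> /andP[x0 x1]; apply: continuousM; first exact: continuous_powR_gt0.
exact: continuous_onem_powR.
Qed.
End beta_density_regularity.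

Section polynomial_integral.
Context {R : realType}.
Notation mu := (@lebesgue_measure R).

(* A nonnegative function whose (real-valued) integral is nonzero is
   integrable: an infinite integral is sent to 0 by [fine]. *)
Lemma integrable_Rintegral_neq0 (D : set R) (f : R -> R) : measurable D ->
  measurable_fun D f -> (forall x, D x -> 0 <= f x) ->
  \int[mu]_(x in D) f x != 0 -> mu.-integrable D (EFin \o f).
Proof.
move=> mD mf f0 intf0; apply/integrableP; split; first exact/measurable_EFinP.
under eq_integral => x /[!inE] Dx do rewrite /= ger0_norm ?f0//.
rewrite ltey; apply: contra intf0 => /eqP intfy.
by rewrite /Rintegral intfy.
Qed.

Lemma bounded_horner01 (p : {poly R}) : [bounded p.[x] | x in `]0, 1[%classic].
Proof.
have /compact_bounded[M [_ Mp]] := continuous_compact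
  (continuous_subspaceT (@continuous_horner R p)) (@segment_compact R 0 1).
exists M; split; rewrite ?num_real// => y My x x01.
by apply: (Mp y My); exists x => //; exact: subset_itv_oo_cc.
Qed.

Variable w : R -> R.

Definition poly_integral (p : {poly R}) : R :=
  \int[mu]_(x in `]0, 1[) (p.[x] * w x).

Lemma eq_poly_integral p q : (forall x, p.[x] = q.[x]) ->
  poly_integral p = poly_integral q.
Proof. by move=> pq; apply: eq_Rintegral => x _; rewrite pq. Qed.

Hypothesis wi : mu.-integrable `]0, 1[ (EFin \o w).

(* Polynomials are bounded on ]0,1[, so p w is integrable with w. *)
Lemma integrable_horner_weight p :
  mu.-integrable `]0, 1[ (EFin \o (fun x => p.[x] * w x)).
Proof.
have mp : measurable_fun (`]0, 1[ : set R) (horner p).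
  exact: measurable_funS (continuous_measurable_fun (@continuous_horner R p)).
have : mu.-integrable `]0, 1[ ((EFin \o horner p) \* (EFin \o w))%E.
  by apply: integrableMr => //; exact: bounded_horner01.
by apply: eq_integrable => // x _; rewrite /= EFinM.
Qed.

Lemma poly_integralD p q :
  poly_integral (p + q) = poly_integral p + poly_integral q.
Proof.
rewrite /poly_integral -RintegralD//; try exact: integrable_horner_weight.
by apply: eq_Rintegral => x _; rewrite hornerD mulrDl.
Qed.

Lemma poly_integralZ c p : poly_integral (c *: p) = c * poly_integral p.
Proof.
rewrite /poly_integral -RintegralZl//; last exact: integrable_horner_weight.
by apply: eq_Rintegral => x _; rewrite hornerZ mulrA.
Qed.
End polynomial_integral.

Section beta_moments_as_polynomial_integrals.
Context {R : realType} (a b : R).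
Notation mu := (@lebesgue_measure R).
Local Notation J := (poly_integral (beta_density a b)).

Lemma beta_expect_poly (p : {poly R}) :
  beta_expect a b (horner p) = J p / J 1.
Proof.
rewrite /beta_expect /poly_integral; congr (_ / _).
by apply: eq_Rintegral => x _; rewrite hornerC mul1r.
Qed.

Lemma beta_central_momentE d :
  beta_central_moment a b d = J (('X - (J 'X / J 1)%:P) ^+ d) / J 1.
Proof.
rewrite /beta_central_moment.
have -> : beta_expect a b id = J 'X / J 1.
  rewrite -beta_expect_poly; congr (beta_expect _ _ _).
  by apply/funext => x; rewrite hornerX.
rewrite -[RHS]beta_expect_poly; congr (beta_expect _ _ _).
by apply/funext => x; rewrite horner_exp !hornerE.
Qed.

Lemma integrable_beta_density : J 1 != 0 ->
  mu.-integrable `]0, 1[ (EFin \o beta_density a b).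
Proof.
move=> J10; apply: integrable_Rintegral_neq0 => //.
- exact: measurable_funS (measurable_beta_density a b).
- by move=> x _; rewrite /beta_density mulr_ge0// powR_ge0.
- apply: contra J10 => /eqP intD0; rewrite /poly_integral.
  by under eq_Rintegral do rewrite hornerC mul1r; rewrite intD0.
Qed.
End beta_moments_as_polynomial_integrals.

Section beta_stein.
Context {R : realType} (a b c : R) (n : nat).
Hypotheses (a0 : 0 < a) (b0 : 0 < b).
Notation mu := (@lebesgue_measure R).

(* The Stein polynomial S: S(x) D(x) is the derivative of stein_primitive. *)
Definition stein_poly : {poly R} :=
  (a%:P * (1 - 'X) - b%:P * 'X) * ('X - c%:P) ^+ n
  + n%:R%:P * ('X * (1 - 'X)) * ('X - c%:P) ^+ n.-1.

Lemma horner_stein_poly (x : R) : stein_poly.[x] =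
  (a * (1 - x) - b * x) * (x - c) ^+ n
  + n%:R * (x * (1 - x)) * (x - c) ^+ n.-1.
Proof. by rewrite /stein_poly !hornerE. Qed.

Definition stein_primitive (x : R) : R :=
  x `^ a * (1 - x) `^ b * (x - c) ^+ n.

(* Product rule, using x^a = x x^(a-1) and (1-x)^b = (1-x)(1-x)^(b-1). *)
Lemma is_derive_stein_primitive (x : R) : 0 < x < 1 ->
  is_derive x 1 stein_primitive (stein_poly.[x] * beta_density a b x).
Proof.
move=> /andP[x0 x1].
have -> : stein_primitive =
    (@powR R ^~ a) * ((@powR R ^~ b) \o (cst 1 - id)) * ((id - cst c) ^+ n).
  by apply/funext => y; rewrite /stein_primitive !fctE.
have dXa : is_derive x 1 (@powR R ^~ a) (a * x `^ (a - 1)).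
  exact: is_derive1_powR.
have dXb : is_derive ((cst 1 - id : R -> R) x) 1 (@powR R ^~ b)
    (b * (1 - x) `^ (b - 1)).
  by apply: is_derive1_powR; rewrite !fctE subr_gt0.
have d1X : is_derive x 1 (cst 1 - id : R -> R) (0 - 1) by apply: is_deriveB.
have dXc : is_derive x 1 (id - cst c : R -> R) (1 - 0) by apply: is_deriveB.
apply: (is_derive_eq (is_deriveM (is_deriveM dXa (is_derive1_comp dXb d1X))
  (is_deriveX n dXc))).
rewrite /beta_density horner_stein_poly !fctE /GRing.scale /=.
rewrite -[x `^ a](mulr_powRB1 (ltW x0) a0).
rewrite -[(1 - x) `^ b](mulr_powRB1 _ b0) ?subr_ge0 ?(ltW x1)//.
ring.
Qed.

Lemma stein_primitive0 : stein_primitive 0 = 0.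
Proof. by rewrite /stein_primitive powR0 ?mul0r// gt_eqF. Qed.

Lemma stein_primitive1 : stein_primitive 1 = 0.
Proof. by rewrite /stein_primitive subrr powR0 ?mulr0 ?mul0r// gt_eqF. Qed.

Lemma continuous_shifted_pow (x : R) :
  {for x, continuous (fun y : R => (y - c) ^+ n)}.
Proof.
apply: (@continuous_comp _ _ _ (fun y : R => y - c) (fun y => y ^+ n)).
  by apply: continuousB; [exact: cvg_id | exact: cst_continuous].
exact: exprn_continuous.
Qed.

(* The primitive tends to 0 at both endpoints because a, b > 0. *)
Lemma stein_primitive_LRcontinuous :
  derivable_oo_LRcontinuous stein_primitive 0 1.
Proof.
split.
- move=> x /[!in_itv]/= x01.
  by have [] := is_derive_stein_primitive x01.
- rewrite stein_primitive0.
  have Xa : (@powR R ^~ a) x @[x --> 0^'+] --> 0 := powR_cvg0 a0.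
  have Xb : (fun x : R => (1 - x) `^ b) x @[x --> 0^'+] --> (1 - 0) `^ b.
    by apply: cvg_at_right_filter; exact: continuous_onem_powR.
  have Xc : (fun x : R => (x - c) ^+ n) x @[x --> 0^'+] --> (0 - c) ^+ n.
    by apply: cvg_at_right_filter; exact: continuous_shifted_pow.
  have := cvgM (cvgM Xa Xb) Xc; rewrite !mul0r.
  by apply; exact: at_right_proper_filter.
- rewrite stein_primitive1.
  have Xa : (@powR R ^~ a) x @[x --> 1^'-] --> 1 `^ a.
    by apply: cvg_at_left_filter; exact: continuous_powR_gt0.
  have Xb : (fun x : R => (1 - x) `^ b) x @[x --> 1^'-] --> 0.
    exact: onem_powR_cvg1.
  have Xc : (fun x : R => (x - c) ^+ n) x @[x --> 1^'-] --> (1 - c) ^+ n.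
    by apply: cvg_at_left_filter; exact: continuous_shifted_pow.
  have := cvgM (cvgM Xa Xb) Xc; rewrite mulr0 mul0r.
  by apply; exact: at_left_proper_filter.
Qed.

Lemma beta_stein_identity :
  mu.-integrable `]0, 1[ (EFin \o beta_density a b) ->
  poly_integral (beta_density a b) stein_poly = 0.
Proof.
move=> iD; rewrite /poly_integral.
rewrite (integrable_FTC2_oo ltr01 _ _ _ stein_primitive_LRcontinuous).
- by rewrite stein_primitive0 stein_primitive1 subrr.
- apply: measurable_funM; last first.
    exact: measurable_funS (measurable_beta_density a b).
  exact: measurable_funS (continuous_measurable_fun (@continuous_horner R _)).
- exact: integrable_horner_weight.
- move=> x /[!in_itv]/= x01; apply: continuousM; first exact: continuous_horner.
  exact: continuous_beta_density.
- move=> x /[!in_itv]/= x01.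
  by rewrite derive1E; have [_ ->] := is_derive_stein_primitive x01.
Qed.
End beta_stein.

Section beta_moment_recurrence.
Context {R : realType} (a b : R).
Hypotheses (a0 : 0 < a) (b0 : 0 < b).
Notation mu := (@lebesgue_measure R).
Hypothesis iD : mu.-integrable `]0, 1[ (EFin \o beta_density a b).
Local Notation J := (poly_integral (beta_density a b)).

Lemma beta_mean_identity : (a + b) * J 'X = a * J 1.
Proof.
have := beta_stein_identity 0 0 a0 b0 iD.
rewrite (@eq_poly_integral _ _ _ (a *: 1 + (- (a + b)) *: 'X)); last first.
  by move=> x; rewrite horner_stein_poly !hornerE; ring.
by rewrite poly_integralD// !poly_integralZ//; lra.
Qed.

(* Stein's identity with c = m the mean and n = k + 1, after writing
   a(1-x) - bx = -(a+b)(x-m) and x(1-x) = -(x-m)^2 + (1-2m)(x-m) + m(1-m). *)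
Lemma beta_shifted_moment_rec (m : R) (k : nat) : (a + b) * m = a ->
  (a + b + k.+1%:R) * J (('X - m%:P) ^+ k.+2) =
    k.+1%:R * (1 - 2 * m) * J (('X - m%:P) ^+ k.+1)
    + k.+1%:R * (m * (1 - m)) * J (('X - m%:P) ^+ k).
Proof.
move=> hm; have := beta_stein_identity m k.+1 a0 b0 iD.
rewrite (@eq_poly_integral _ _ _
    ((- (a + b + k.+1%:R)) *: ('X - m%:P) ^+ k.+2
    + (k.+1%:R * (1 - 2 * m)) *: ('X - m%:P) ^+ k.+1
    + (k.+1%:R * (m * (1 - m))) *: ('X - m%:P) ^+ k)); last first.
  move=> x; rewrite horner_stein_poly.
  rewrite !(hornerD, hornerZ, horner_exp, hornerX, hornerC, hornerN).
  have -> : a * (1 - x) - b * x = - (a + b) * (x - m) + (a - (a + b) * m).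
    by ring.
  by rewrite hm subrr addr0 -pred_Sn !exprS; ring.
by rewrite !poly_integralD// !poly_integralZ//; lra.
Qed.
End beta_moment_recurrence.

Theorem theorem3 (R : realType) (a b : R) (ha : 0 < a) (hb : 0 < b)
  (d : nat) (hd : (2 <= d)%N) :
  beta_central_moment a b d =
    ((d%:R - 1) * (b - a)) / ((a + b) * (a + b + d%:R - 1))
      * beta_central_moment a b d.-1
    + ((d%:R - 1) * a * b) / ((a + b) ^+ 2 * (a + b + d%:R - 1))
      * beta_central_moment a b d.-2.
Proof.
rewrite !beta_central_momentE.
set J := poly_integral (beta_density a b).
have [->|J1] := eqVneq (J 1) 0; first by rewrite !invr0 !mulr0 addr0.
have iD := integrable_beta_density J1.
have hab : a + b != 0 by rewrite gt_eqF// addr_gt0.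
have hm : (a + b) * (a / (a + b)) = a by rewrite mulrCA divff ?mulr1.
have mE : J 'X / J 1 = a / (a + b).
  by apply: (mulfI hab); rewrite mulrA beta_mean_identity// mulfK// hm.
rewrite mE; move: hd; case: d => [|[|k]]// _ /=.
have := beta_shifted_moment_rec ha hb iD k hm; rewrite -!natr1 -/J => rec.
have hk : a + b + (k%:R + 1) != 0 by rewrite natr1 gt_eqF// !addr_gt0.
rewrite -[J (_ ^+ k.+2)](mulKf hk) rec; field.
have -> : a + b + (k%:R + 1 + 1) - 1 = a + b + (k%:R + 1) by ring.
by rewrite J1 hk hab.
Qed.
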